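(* Let $\mathrm r=(r_1,\dots,r_d)\in\mathbb{Z}_+^d$ with $\mathrm r>0$. Then the map $\Phi:\bar{\mathcal F}_d^{\mathrm r}\to \bar S_d^{\mathrm r}\times C_d^{\mathrm r}$, $(\mathbf f,c_{\mathbf f})\mapsto(\Psi((\mathbf f,c_{\mathbf f})),\mathrm c_{(\mathbf f,c_{\mathbf f})})$, is a bijection.
   Context: $d\ge2$, $[d]=\{1,\dots,d\}$. A plane forest is a finite or infinite sequence $\mathbf t_1,\mathbf t_2,\dots$ of finite rooted plane (ordered) trees; its vertices are listed in breadth-first search order (first the vertices of $\mathbf t_1$ generation by generation, each generation from left to right, then those of $\mathbf t_2$, etc.). A $d$-type forest $(\mathbf f,c_{\mathbf f})$ is a plane forest with a map $c_{\mathbf f}$ from its vertices to $[d]$ (the type) such that children of a common parent appear, from left to right, in nondecreasing order of type; $\mathcal F_d$ is the set of (unlabeled) $d$-type forests. $p_j(u)$ is the number of children of type $j$ of the vertex $u$. A subtree of type $i$ is a maximal connected subgraph all of whose vertices have type $i$; the subforest $\mathbf f^{(i)}$ of type $i$ is the plane forest formed by the subtrees of type $i$, ranked according to the order of their roots in $\mathbf f$; $u^{(i)}_1,u^{(i)}_2,\dots$ are its vertices in its own breadth-first order. The root type sequence is $\mathrm c_{(\mathbf f,c_{\mathbf f})}=(c_{\mathbf f}(r(\mathbf t_1)),c_{\mathbf f}(r(\mathbf t_2)),\dots)$ where $r(\mathbf t)$ is the root of $\mathbf t$. $S_d$: families $x=(x^{(1)},\dots,x^{(d)})$, $x^{(i)}=(x^{i,1},\dots,x^{i,d})$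 a $\mathbb{Z}^d$-valued sequence indexed by $\{0,\dots,n_i\}$ ($0\le n_i\le\infty$), $x^{(i)}_0=0$, $x^{i,j}$ nondecreasing for $i\ne j$, $x^{i,i}_{n+1}-x^{i,i}_n\ge -1$; $(n_1,\dots,n_d)$ is its length; $x^{i,j}(n):=x^{i,j}_n$. $\Psi:\mathcal F_d\to S_d$ maps $(\mathbf f,c_{\mathbf f})$ to $x$ where $n_i$ is the number of vertices of $\mathbf f^{(i)}$, $x^{(i)}_0=0$, and $x^{i,j}_{n+1}-x^{i,j}_n=p_j(u^{(i)}_{n+1})$ for $j\ne i$, $x^{i,i}_{n+1}-x^{i,i}_n=p_i(u^{(i)}_{n+1})-1$, $0\le n\le n_i-1$. Coordinatewise order $\le$ on $\overline{\mathbb{Z}}_+^d$; $\mathrm q<\mathrm q'$ means $\mathrm q\le\mathrm q'$ and $\mathrm q\ne\mathrm q'$. A solution of $(\mathrm r,x)$ (for $x$ of length $\mathrm q$) is $\mathrm s\in\mathbb{Z}_+^d$, $\mathrm s\le\mathrm q$, with $r_j+\sum_i x^{i,j}(s_i)=0$ for all $j$; the smallest solution is a solution $\le$ every other solution. $S_d^{\mathrm r}$ is the set of $x\in S_d$ whose length lies in $\mathbb{N}^d$ ($\mathbb N=\{1,2,\dots\}$) and is the smallest solution of $(\mathrm r,x)$; $\bar S_d^{\mathrm r}$ is the set of $x\in S_d^{\mathrm r}$ with $x^{i,i}_k=-k$ for all $k$ and $i$. For $r=r_1+\dots+r_d$, $C_d^{\mathrm r}=\{c\in[d]^r:\#\{j\in[r]:c_j=i\}=r_i,\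 i\in[d]\}$. $\mathcal F_d^{\mathrm r}$ is the set of $(\mathbf f,c_{\mathbf f})\in\mathcal F_d$ with $r_1+\dots+r_d$ trees, containing at least one vertex of each type, with root type sequence in $C_d^{\mathrm r}$; $\bar{\mathcal F}_d^{\mathrm r}$ is the set of those $(\mathbf f,c_{\mathbf f})\in\mathcal F_d^{\mathrm r}$ in which no vertex of type $i$ has a child of type $i$, for every $i$. *)

From mathcomp Require Import all_boot all_order all_algebra.
Set Implicit Arguments. Unset Strict Implicit. Unset Printing Implicit Defensive.
Import GRing.Theory Num.Theory.
Local Open Scope ring_scope.

(* Types are encoded by 'I_d (type k+1 of the paper <-> ordinal k). *)

(* A finite rooted plane tree whose vertices carry a type in 'I_d:
   MNode c [:: t1; ...; tk] is a root of type c with ordered subtrees t1..tk.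
   A vertex is represented by the subtree rooted at it. *)
Inductive mtree (d : nat) : Type := MNode of 'I_d & seq (mtree d).

Definition typ d (t : mtree d) : 'I_d := let: MNode c _ := t in c.
Definition children d (t : mtree d) : seq (mtree d) := let: MNode _ cs := t in cs.

Fixpoint tsize d (t : mtree d) : nat :=
  let: MNode _ cs := t in (sumn (map (@tsize d) cs)).+1.

Definition mforest d := seq (mtree d).

(* Breadth-first listing of the vertices of a tree generated from a root [a]
   by a child-selection function [sel], generation by generation, each
   generation from left to right; [fuel] must be at least the height + 1. *)
Definition bfs (A : Type) (sel : A -> seq A) (fuel : nat) (a : A) : seq A :=
  flatten (mkseq (fun k => iter k (fun l => flatten (map sel l)) [:: a]) fuel).

Definition vsel d (p : mtree d * option 'I_d) : seq (mtree d * option 'I_d) :=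
  [seq (c, Some (typ p.1)) | c <- children p.1].

Definition vertices_par d (f : mforest d) : seq (mtree d * option 'I_d) :=
  flatten [seq bfs (@vsel d) (tsize t) (t, None) | t <- f].

Definition vertices d (f : mforest d) : seq (mtree d) :=
  [seq p.1 | p <- vertices_par f].

Definition pch d (u : mtree d) (j : 'I_d) : nat :=
  count (fun c => typ c == j) (children u).

Definition in_Fd d (f : mforest d) : Prop :=
  all (fun u => sorted (fun a b => (typ a <= typ b)%N) (children u)) (vertices f).

(* Roots of the subtrees of type i (maximal connected type-i subgraphs), in
   the order in which they appear in f: vertices of type i that are roots of
   a tree of f or whose parent has a type different from i. *)
Definition sub_roots d (f : mforest d) (i : 'I_d) : seq (mtree d) :=
  [seq p.1 | p <- vertices_par f & (typ p.1 == i) && (p.2 != Some i)].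

(* u^{(i)}_1, u^{(i)}_2, ... : vertices of the subforest f^{(i)}, listed in its
   own breadth-first order (trees of f^{(i)} one after the other). *)
Definition sub_vertices d (f : mforest d) (i : 'I_d) : seq (mtree d) :=
  flatten [seq bfs (fun u => [seq c <- children u | typ c == i]) (tsize t) t
          | t <- sub_roots f i].

(* Elements of S_d of finite length: x i = [:: x^{(i)}_0; ...; x^{(i)}_{n_i}],
   each x^{(i)}_k being the vector (x^{i,1}_k, ..., x^{i,d}_k) in Z^d. *)
Definition Sdata d := {ffun 'I_d -> seq {ffun 'I_d -> int}}.

Definition xlen d (x : Sdata d) (i : 'I_d) : nat := (size (x i)).-1.

Definition xval d (x : Sdata d) (i j : 'I_d) (k : nat) : int :=
  (nth [ffun=> 0] (x i) k) j.

Definition in_Sd d (x : Sdata d) : Prop :=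
  [/\ forall i, (0 < size (x i))%N,
      forall i j, xval x i j 0 = 0,
      forall i j k, i != j -> (k < xlen x i)%N -> xval x i j k <= xval x i j k.+1
    & forall i k, (k < xlen x i)%N -> xval x i i k - 1 <= xval x i i k.+1].

Definition is_solution d (r : 'I_d -> nat) (x : Sdata d) (s : 'I_d -> nat) : Prop :=
  (forall i, (s i <= xlen x i)%N) /\
  (forall j, (r j)%:Z + \sum_(i < d) xval x i j (s i) = 0).

Definition is_smallest_solution d (r : 'I_d -> nat) (x : Sdata d) (s : 'I_d -> nat) : Prop :=
  is_solution r x s /\ (forall s', is_solution r x s' -> forall i, (s i <= s' i)%N).

Definition in_Sr d (r : 'I_d -> nat) (x : Sdata d) : Prop :=
  [/\ in_Sd x, forall i, (0 < xlen x i)%N & is_smallest_solution r x (xlen x)].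

Definition in_barSr d (r : 'I_d -> nat) (x : Sdata d) : Prop :=
  in_Sr r x /\ (forall i k, (k <= xlen x i)%N -> xval x i i k = - (k%:Z)).

Definition in_Cr d (r : 'I_d -> nat) (c : seq 'I_d) : Prop :=
  size c = (\sum_(i < d) r i)%N /\ (forall i, count (pred1 i) c = r i).

Definition root_types d (f : mforest d) : seq 'I_d := [seq typ t | t <- f].

Definition in_Fr d (r : 'I_d -> nat) (f : mforest d) : Prop :=
  [/\ in_Fd f, size f = (\sum_(i < d) r i)%N,
      forall i, has (fun u => typ u == i) (vertices f)
    & in_Cr r (root_types f)].

Definition in_barFr d (r : 'I_d -> nat) (f : mforest d) : Prop :=
  in_Fr r f /\
  all (fun u => all (fun c => typ c != typ u) (children u)) (vertices f).

Definition Psi d (f : mforest d) : Sdata d :=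
  [ffun i =>
    let us := sub_vertices f i in
    mkseq (fun k => [ffun j => \sum_(u <- take k us) ((pch u j)%:Z - (i == j)%:Z)])
          (size us).+1].

Definition Phi d (f : mforest d) : Sdata d * seq 'I_d := (Psi f, root_types f).

(* In a forest without same-type parent-child pairs every subtree of type i is a
   single vertex, so u^(i)_1, u^(i)_2, ... are the type-i vertices in breadth-first
   order, and x^{i,j}_{k+1} - x^{i,j}_k + [i = j] counts the type-j children of the
   (k+1)-th of them.  Hence Phi f records, for every type i and rank k, the sorted
   child types of the k-th type-i vertex; together with the root types this rebuilds
   the forest generation by generation, and any such data (with finitely many
   children in total) is realised by some forest.  The equations of (r, x) at
   s = (n_1, ..., n_d) say that every vertex is a root or a child; minimality holds
   because a breadth-first listing meets every vertex after its parent, so the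
   shortest prefix exceeding a solution s would have to exceed it already before
   its last vertex. *)

From mathcomp Require Import all_boot all_order all_algebra zify.
Set Implicit Arguments. Unset Strict Implicit. Unset Printing Implicit Defensive.
Import GRing.Theory Num.Theory.

(** * Generation-by-generation listings *)

Section Levels.
Variables (A : Type) (sel : A -> seq A).

Fixpoint levels n (L : seq A) : seq A :=
  if n is n'.+1 then L ++ levels n' (flatten (map sel L)) else [::].

Lemma levels_nil n : levels n [::] = [::].
Proof. by elim: n => //= n ->. Qed.

Lemma bfs_levels n a : bfs sel n a = levels n [:: a].
Proof.
rewrite /bfs; elim: n [:: a] => [|n IH] L //=.
rewrite /mkseq /= -IH /mkseq; congr (_ ++ flatten _).
rewrite (iotaDl 1 0 n) -map_comp; apply: eq_map => k /=.
by rewrite add0n -iterSr iterS.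
Qed.

End Levels.

Lemma map_levels A A' (sel : A -> seq A) (sel' : A' -> seq A') (g : A -> A') n L :
  (forall a, map g (sel a) = sel' (g a)) ->
  map g (levels sel n L) = levels sel' n (map g L).
Proof.
move=> gsel; elim: n L => [|n IH] L //=.
rewrite map_cat IH map_flatten -!map_comp; congr (_ ++ levels _ _ (flatten _)).
by apply: eq_map => a /=; rewrite gsel.
Qed.

Section Forests.
Variable d : nat.
Implicit Types (t u : mtree d) (F G L : seq (mtree d)) (f : mforest d) (i j : 'I_d).

Definition next_gen L := flatten (map (@children d) L).
Definition weight L := sumn (map (@tsize d) L).

(* Generation-by-generation listing of all the vertices of the trees of F,
   mixing the trees; [bfs_trees] lists the trees one after the other. *)
Definition bfs_layers F := levels (@children d) (weight F) F.
Definition bfs_trees f := flatten [seq bfs_layers [:: t] | t <- f].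

Lemma next_gen_cons t L : next_gen (t :: L) = children t ++ next_gen L.
Proof. by []. Qed.

Lemma next_gen_cat L1 L2 : next_gen (L1 ++ L2) = next_gen L1 ++ next_gen L2.
Proof. by rewrite /next_gen map_cat flatten_cat. Qed.

Lemma weight_cons t L : weight (t :: L) = tsize t + weight L.
Proof. by []. Qed.

Lemma weight_cat L1 L2 : weight (L1 ++ L2) = weight L1 + weight L2.
Proof. by rewrite /weight map_cat sumn_cat. Qed.

Lemma tsizeE t : tsize t = (weight (children t)).+1.
Proof. by case: t. Qed.

Lemma weight_next_gen L : weight (next_gen L) + size L = weight L.
Proof.
elim: L => [|t L IH] //=.
by rewrite next_gen_cons weight_cat weight_cons tsizeE -IH /=; lia.
Qed.

Lemma weight_eq0 L : weight L = 0 -> L = [::].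
Proof. by case: L => // t L; rewrite /weight /= tsizeE. Qed.

Lemma weight_next_gen_lt L : 0 < size L -> weight (next_gen L) < weight L.
Proof. by move=> L0; have := weight_next_gen L; lia. Qed.

Lemma levels_enough n m L : weight L <= n -> weight L <= m ->
  levels (@children d) n L = levels (@children d) m L.
Proof.
elim: n m L => [|n IH] [|m] L Ln Lm //;
  try by rewrite (weight_eq0 (_ : weight L = 0)) ?levels_nil //; lia.
rewrite /=; congr (_ ++ _); have := weight_next_gen L.
case: (posnP (size L)) => [/size0nil -> | L0] eL; first by rewrite !levels_nil.
by apply: (IH _ (next_gen L)); lia.
Qed.

Lemma bfs_layers_rec F : bfs_layers F = F ++ bfs_layers (next_gen F).
Proof.
have [/size0nil -> //|F0] := posnP (size F).
have := weight_next_gen F; rewrite {1}/bfs_layers.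
case: (weight F) => [|n] eF; first lia.
by rewrite /= (@levels_enough n (weight (next_gen F))) // -/(next_gen F); lia.
Qed.

Lemma vertices_bfs_trees f : vertices f = bfs_trees f.
Proof.
rewrite /vertices /vertices_par map_flatten -map_comp; congr flatten.
apply: eq_map => t /=; rewrite bfs_levels (@map_levels _ _ _ (@children d)) /=.
  by rewrite /bfs_layers /weight /= addn0.
by move=> [u o]; rewrite /vsel -map_comp map_id.
Qed.

(** * Counting vertices by type *)

Definition ntyp i L := count (fun u => typ u == i) L.
Definition of_typ i L := [seq u <- L | typ u == i].

Lemma ntyp_cat i L1 L2 : ntyp i (L1 ++ L2) = ntyp i L1 + ntyp i L2.
Proof. exact: count_cat. Qed.

Lemma size_of_typ i L : size (of_typ i L) = ntyp i L.
Proof. exact: size_filter. Qed.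

Lemma of_typ_cat i L1 L2 : of_typ i (L1 ++ L2) = of_typ i L1 ++ of_typ i L2.
Proof. exact: filter_cat. Qed.

Lemma sum_eqn_mul (c : 'I_d -> nat) j : \sum_(i < d) (i == j) * c i = c j.
Proof. by rewrite (bigD1 j) //= eqxx mul1n big1 ?addn0 // => i /negbTE->. Qed.

Lemma all_of_typ (P : pred (mtree d)) i L : all P L -> all P (of_typ i L).
Proof. by rewrite all_filter; apply: sub_all => u /= ->; rewrite implybT. Qed.

Lemma ntyp_next_gen j L : ntyp j (next_gen L) = \sum_(u <- L) pch u j.
Proof.
by elim: L => [|u L IH]; rewrite ?big_nil ?big_cons // next_gen_cons ntyp_cat IH.
Qed.

Lemma ntyp_next_gen_of_typ j L :
  ntyp j (next_gen L) = \sum_(k < d) ntyp j (next_gen (of_typ k L)).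
Proof.
under eq_bigr => k _ do rewrite ntyp_next_gen big_filter.
rewrite ntyp_next_gen (exchange_big_dep xpredT) //=; apply: eq_bigr => u _.
by rewrite (big_pred1 (typ u)) // => k; rewrite eq_sym.
Qed.

Lemma ntyp_next_gen_take_mono j L p q : p <= q ->
  ntyp j (next_gen (take p L)) <= ntyp j (next_gen (take q L)).
Proof.
move=> pq; rewrite -(cat_take_drop p (take q L)) -take_min (minn_idPl pq) next_gen_cat ntyp_cat.
exact: leq_addr.
Qed.

Lemma bfs_layers_balance i F :
  ntyp i (bfs_layers F) = ntyp i F + ntyp i (next_gen (bfs_layers F)).
Proof.
have [n] := ubnP (weight F); elim: n F => // n IH F Fn.
have [/size0nil -> //|F0] := posnP (size F).
rewrite bfs_layers_rec next_gen_cat !ntyp_cat IH; first lia.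
by have := weight_next_gen_lt F0; lia.
Qed.

Lemma ntyp_take_le i L k : ntyp i (take k L) <= ntyp i L.
Proof. by rewrite -{2}(cat_take_drop k L) ntyp_cat leq_addr. Qed.

Lemma take_size_addn A (s1 s2 : seq A) m : take (size s1 + m) (s1 ++ s2) = s1 ++ take m s2.
Proof. by rewrite takeD take_size_cat // drop_size_cat. Qed.

(* Every vertex but a root is a child of an earlier vertex. *)
Lemma bfs_layers_prefix i F k : k < size (bfs_layers F) ->
  ntyp i (take k.+1 (bfs_layers F)) <= ntyp i F + ntyp i (next_gen (take k (bfs_layers F))).
Proof.
have [n] := ubnP (weight F); elim: n F k => // n IH F k Fn.
have [/size0nil -> //|F0] := posnP (size F).
rewrite bfs_layers_rec size_cat => kB.
have [kF|Fk] := leqP k.+1 (size F).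
  by rewrite takel_cat // (leq_trans (ntyp_take_le _ _ _)) ?leq_addr.
rewrite ltnS in Fk; rewrite -(subnKC Fk) -addnS !take_size_addn next_gen_cat !ntyp_cat.
rewrite leq_add2l IH //; first by have := weight_next_gen_lt F0; lia.
by rewrite -(ltn_add2l (size F)) subnKC.
Qed.

Lemma bfs_trees_cons t f : bfs_trees (t :: f) = bfs_layers [:: t] ++ bfs_trees f.
Proof. by []. Qed.

Lemma ntyp_cons i t L : ntyp i (t :: L) = ntyp i [:: t] + ntyp i L.
Proof. by rewrite /ntyp /= addn0. Qed.

Lemma bfs_trees_balance i f :
  ntyp i (bfs_trees f) = ntyp i f + ntyp i (next_gen (bfs_trees f)).
Proof.
elim: f => [|t f IH] //.
by rewrite bfs_trees_cons next_gen_cat !ntyp_cat bfs_layers_balance IH (ntyp_cons i t f); lia.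
Qed.

Lemma bfs_trees_prefix i f k : k < size (bfs_trees f) ->
  ntyp i (take k.+1 (bfs_trees f)) <= ntyp i f + ntyp i (next_gen (take k (bfs_trees f))).
Proof.
elim: f k => [|t f IH] k //; rewrite bfs_trees_cons size_cat (ntyp_cons i t f) => kV.
have [kt|tk] := leqP k.+1 (size (bfs_layers [:: t])).
  rewrite !takel_cat ?(ltnW kt) //.
  by apply: leq_trans (bfs_layers_prefix i kt) _; lia.
rewrite ltnS in tk; rewrite -(subnKC tk) -addnS !take_size_addn next_gen_cat !ntyp_cat.
rewrite bfs_layers_balance; have := IH (k - size (bfs_layers [:: t])); lia.
Qed.

Lemma filter_take A (a : pred A) (s : seq A) m :
  filter a (take m s) = take (count a (take m s)) (filter a s).
Proof.
elim: s m => [|x s IH] [|m] //=; first by rewrite take0.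
by case: (a x) => //=; rewrite IH.
Qed.

(* Otherwise the shortest prefix of the listing exceeding some bound s i ends
   with a root or a child of an earlier vertex: see [bfs_trees_prefix]. *)
Lemma ntyp_bfs_trees_le f (s : 'I_d -> nat) :
  (forall i, ntyp i f +
     \sum_(k < d) ntyp i (next_gen (take (s k) (of_typ k (bfs_trees f)))) <= s i) ->
  forall i, ntyp i (bfs_trees f) <= s i.
Proof.
move=> hs; apply/forallP; apply: contraT; rewrite negb_forall => /existsP[i0 hi0].
pose P m := [exists i, s i < ntyp i (take m (bfs_trees f))].
have [|m hm hmin] := ex_minnP (_ : exists m, P m).
  by exists (size (bfs_trees f)); apply/existsP; exists i0; rewrite take_size ltnNge.
case: m hm hmin => [/existsP[i]|k hk hmin]; first by rewrite take0.
have kV : k < size (bfs_trees f).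
  rewrite ltnNge; apply/negP => Vk; suff /hmin : P k by rewrite ltnn.
  by move: hk; rewrite /P (take_oversize Vk) (take_oversize (leqW Vk)).
case/existsP: hk => i hi.
have := bfs_trees_prefix i kV; rewrite ntyp_next_gen_of_typ.
have : \sum_(k0 < d) ntyp i (next_gen (of_typ k0 (take k (bfs_trees f)))) <=
       \sum_(k0 < d) ntyp i (next_gen (take (s k0) (of_typ k0 (bfs_trees f)))).
  apply: leq_sum => k0 _; rewrite /of_typ filter_take -/(of_typ k0 _).
  apply: ntyp_next_gen_take_mono; rewrite leqNgt; apply/negP => sk0.
  suff /hmin : P k by rewrite ltnn.
  by apply/existsP; exists k0.
have := hs i; lia.
Qed.

(** * Forests with prescribed child types *)

Definition child_typs u := map (@typ d) (children u).

Lemma map_typ_next_gen L : map (@typ d) (next_gen L) = flatten (map child_typs L).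
Proof. by rewrite /next_gen map_flatten -map_comp. Qed.

Lemma count_typ i L : count_mem i (map (@typ d) L) = ntyp i L.
Proof. exact: count_map. Qed.

Lemma pchE u j : pch u j = count_mem j (child_typs u).
Proof. exact/esym/count_typ. Qed.

Lemma eq_from_next_gen F G : map (@typ d) F = map (@typ d) G ->
  map child_typs F = map child_typs G -> next_gen F = next_gen G -> F = G.
Proof.
elim: F G => [|[a cs] F IH] [|[b cs'] G] //= [-> eFG] [ecs eFG'].
rewrite !next_gen_cons /= => ecat.
have scs : size cs = size cs' by rewrite -(size_map (@typ d) cs) [map _ cs]ecs size_map.
have ecs' : cs = cs' by rewrite -(take_size_cat (next_gen F) scs) ecat take_size_cat.
by move: ecat; rewrite ecs' => /(congr1 (drop (size cs'))); rewrite !drop_size_cat // => /IH->.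
Qed.

Section ChildTypes.

(* chl i k prescribes the child types of the k-th vertex of type i, counting
   from 0; pos i is the number of type-i vertices already consumed. *)
Variable chl : 'I_d -> nat -> seq 'I_d.
Implicit Type pos : 'I_d -> nat.

Definition follows pos L := forall i k, k < ntyp i L ->
  child_typs (nth (MNode i [::]) (of_typ i L) k) = chl i (pos i + k).

Definition advance pos (s : seq 'I_d) := fun i => pos i + count_mem i s.

Lemma follows_cat pos L1 L2 :
  follows pos (L1 ++ L2) <-> follows pos L1 /\ follows (advance pos (map (@typ d) L1)) L2.
Proof.
rewrite /advance; split=> [fL|[fL1 fL2] i k].
  split=> i k ki.
    by have := fL i k; rewrite ntyp_cat of_typ_cat nth_cat size_of_typ ki ltn_addr //; apply.
  have := fL i (ntyp i L1 + k); rewrite ntyp_cat of_typ_cat nth_cat size_of_typ ltn_add2l.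
  by rewrite ki ltnNge leq_addr addKn count_typ addnA; apply.
rewrite ntyp_cat of_typ_cat nth_cat size_of_typ => ki.
case: ltnP => L1k; first exact: fL1.
by have := fL2 i (k - ntyp i L1); rewrite count_typ -addnA subnKC // ltn_subLR //; apply.
Qed.

Fixpoint child_lists pos (s : seq 'I_d) : seq (seq 'I_d) :=
  if s is a :: s' then chl a (pos a) :: child_lists (advance pos [:: a]) s' else [::].

Lemma size_child_lists pos s : size (child_lists pos s) = size s.
Proof. by elim: s pos => //= a s IH pos; rewrite IH. Qed.

Lemma follows_cons pos u L : follows pos (u :: L) <->
  child_typs u = chl (typ u) (pos (typ u)) /\ follows (advance pos [:: typ u]) L.
Proof.
rewrite -cat1s follows_cat; apply: and_iff_compat_r.
rewrite /follows /ntyp /of_typ /=; split=> [|cu i k].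
  by move/(_ (typ u) 0); rewrite eqxx !addn0 => /(_ isT).
by case: eqP => //= <-; case: k => //= _; rewrite addn0.
Qed.

Lemma followsE pos L :
  follows pos L <-> map child_typs L = child_lists pos (map (@typ d) L).
Proof.
elim: L pos => [|u L IH] pos; first by split.
by rewrite follows_cons IH /=; split=> [[-> ->] //|[-> ->]].
Qed.

Lemma follows_all (P : pred (mtree d)) pos L :
  (forall u k, child_typs u = chl (typ u) k -> P u) -> follows pos L -> all P L.
Proof.
move=> chlP; elim: L pos => [|u L IH] pos //= /follows_cons[/chlP Pu /IH PL].
by rewrite Pu.
Qed.

Lemma follows_bfs_layers_inj pos F G : map (@typ d) F = map (@typ d) G ->
  follows pos (bfs_layers F) -> follows pos (bfs_layers G) -> F = G.
Proof.
have [n] := ubnP (weight F + weight G); elim: n pos F G => // n IH pos F G FGn eFG.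
rewrite (bfs_layers_rec F) (bfs_layers_rec G) => /follows_cat[fF fF'] /follows_cat[fG fG'].
have [/size0nil eF|F0] := posnP (size F).
  by move: eFG; rewrite eF; case: G {FGn fG fG'}.
have G0 : 0 < size G by rewrite -(size_map (@typ d)) -eFG size_map.
have ech : map child_typs F = map child_typs G.
  by move/followsE: fF => ->; move/followsE: fG => ->; rewrite eFG.
apply: eq_from_next_gen => //; apply: (IH (advance pos (map (@typ d) F))) => //.
- by have := weight_next_gen_lt F0; have := weight_next_gen_lt G0; lia.
- by rewrite !map_typ_next_gen ech.
- by rewrite eFG.
Qed.

Lemma follows_bfs_trees_inj pos f g : map (@typ d) f = map (@typ d) g ->
  follows pos (bfs_trees f) -> follows pos (bfs_trees g) -> f = g.
Proof.
elim: f g pos => [|t f IH] [|t' g] pos //= [ett efg].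
rewrite !bfs_trees_cons => /follows_cat[ft ff] /follows_cat[ft' fg].
have [et] : [:: t] = [:: t'] by apply: follows_bfs_layers_inj ft ft'; rewrite /= ett.
by subst t'; rewrite (IH g _ efg ff fg).
Qed.

Section Existence.

Variable N : nat.
Hypothesis chl_bounded : forall i k, N <= k -> chl i k = [::].

(* The termination measure of the construction below. *)
Definition budget pos := \sum_(i < d) \sum_(pos i <= k < N) size (chl i k).

Lemma budget_ext pos pos' : pos =1 pos' -> budget pos = budget pos'.
Proof. by move=> epos; apply: eq_bigr => i _; rewrite epos. Qed.

Lemma budget_advance1 pos a :
  budget pos = size (chl a (pos a)) + budget (advance pos [:: a]).
Proof.
rewrite /budget (bigD1 a) //= [in RHS](bigD1 a) //= addnA; congr (_ + _).
  rewrite /advance /= eqxx addn0 addn1; case: (ltnP (pos a) N) => aN.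
    by rewrite big_ltn.
  by rewrite chl_bounded // !big_geq // ltnW.
by apply: eq_bigr => i ia; rewrite /advance /= eq_sym (negbTE ia) !addn0.
Qed.

Lemma budget_child_lists pos s :
  budget pos = sumn (map size (child_lists pos s)) + budget (advance pos s).
Proof.
elim: s pos => [|a s IH] pos /=; first by apply: budget_ext => i; rewrite /advance addn0.
rewrite (budget_advance1 pos a) IH -addnA; congr (_ + (_ + _)).
by apply: budget_ext => i; rewrite /advance /= addn0 addnA.
Qed.

(* Build the first generation with root types s, and recursively the forest
   generated by its children, whose types are prescribed by chl. *)
Lemma exists_follows_bfs_layers s pos :
  exists F, map (@typ d) F = s /\ follows pos (bfs_layers F).
Proof.
have [m] := ubnP (size s + budget pos); elim: m s pos => // m IH s pos sm.
case: s sm => [|a s'] sm; first by exists [::].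
set s := a :: s'; set C := child_lists pos s.
have [F' [eF' fF']] : exists F', map (@typ d) F' = flatten C /\
    follows (advance pos s) (bfs_layers F').
  apply: IH; move: sm; rewrite (budget_child_lists pos s) size_flatten /shape -/C /=; lia.
set Fs := reshape (map size C) F'.
have sFs : size Fs = size s by rewrite size_reshape size_map size_child_lists.
exists [seq MNode p.1 p.2 | p <- zip s Fs].
have eT : map (@typ d) [seq MNode p.1 p.2 | p <- zip s Fs] = s.
  by rewrite -map_comp (eq_map (g := fst)); [apply: (@unzip1_zip _ _ s Fs); rewrite sFs | case].
have eC : map (@children d) [seq MNode p.1 p.2 | p <- zip s Fs] = Fs.
  by rewrite -map_comp (eq_map (g := snd)); [apply: (@unzip2_zip _ _ s Fs); rewrite sFs | case].
split=> //; rewrite bfs_layers_rec; apply/follows_cat; split.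
  apply/followsE; rewrite eT -/C /child_typs (map_comp (map (@typ d)) (@children d)) eC.
  by rewrite map_reshape eF'; exact: (flattenK C).
have -> : next_gen [seq MNode p.1 p.2 | p <- zip s Fs] = F'.
  by rewrite /next_gen eC reshapeKr // -(size_map (@typ d)) eF' size_flatten.
by rewrite eT.
Qed.

Lemma exists_follows_bfs_trees s pos :
  exists f, map (@typ d) f = s /\ follows pos (bfs_trees f).
Proof.
elim: s pos => [|a s IH] pos; first by exists [::].
have [F [eF fF]] := exists_follows_bfs_layers [:: a] pos.
case: F eF fF => [|t [|//]] // [<-] ft.
have [f [<- ff]] := IH (advance pos (map (@typ d) (bfs_layers [:: t]))).
by exists (t :: f); split; rewrite // bfs_trees_cons; apply/follows_cat.
Qed.

End Existence.

End ChildTypes.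

(** * Forests without same-type children, and Psi *)

Definition no_same_typ_child u := all (fun c => typ c != typ u) (children u).

Definition parent_typ_differs (p : mtree d * option 'I_d) :=
  if p.2 is Some j then j != typ p.1 else true.

Lemma no_same_typ_childE u : no_same_typ_child u = (pch u (typ u) == 0).
Proof. by rewrite eqn0Ngt -has_count -all_predC. Qed.

Lemma ntyp_next_gen_typ_eq0 i L :
  all (fun u => (typ u == i) && no_same_typ_child u) L -> ntyp i (next_gen L) = 0.
Proof.
rewrite ntyp_next_gen; elim: L => [|u L IH] /=; rewrite ?big_nil ?big_cons //.
by case/andP=> /andP[/eqP ei]; rewrite no_same_typ_childE ei => /eqP -> /IH ->.
Qed.

Lemma levels_parent_typ_differs n P :
  all no_same_typ_child (map fst (levels (@vsel d) n P)) ->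
  all parent_typ_differs P -> all parent_typ_differs (levels (@vsel d) n P).
Proof.
elim: n P => [|n IH] P //=; rewrite map_cat !all_cat => /andP[nsP nsP'] ->.
apply: IH => //; elim: P nsP {nsP'} => [|p P IHP] //= /andP[nsp nsP].
by rewrite all_cat IHP // andbT /vsel all_map; apply: sub_all nsp => c /=; rewrite eq_sym.
Qed.

Lemma vertices_par_parent_typ_differs f :
  all no_same_typ_child (vertices f) -> all parent_typ_differs (vertices_par f).
Proof.
rewrite /vertices /vertices_par; elim: f => [|t f IH] //=.
rewrite !map_cat !all_cat => /andP[nst nsf]; rewrite IH // andbT.
by move: nst; rewrite !bfs_levels => nst; apply: levels_parent_typ_differs.
Qed.

Section NoSameTypChild.

Variable f : mforest d.
Hypothesis f_no_same : all no_same_typ_child (vertices f).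

Lemma sub_roots_of_typ i : sub_roots f i = of_typ i (bfs_trees f).
Proof.
rewrite /sub_roots -vertices_bfs_trees /vertices /of_typ filter_map; congr map.
elim: (vertices_par f) (vertices_par_parent_typ_differs f_no_same) => [|p s IH] //=.
case/andP=> pd /IH ->; case: eqP => //= pi; case: p pd pi => u [j|] //= ju <-.
by rewrite (inj_eq Some_inj) (negbTE ju).
Qed.

Lemma of_typ_no_same_typ_child i :
  all (fun u => (typ u == i) && no_same_typ_child u) (of_typ i (bfs_trees f)).
Proof.
rewrite all_filter; move: f_no_same; rewrite vertices_bfs_trees.
by apply: sub_all => u /= ->; rewrite implybE andbT orNb.
Qed.

(* The subtrees of type i are single vertices. *)
Lemma sub_vertices_of_typ i : sub_vertices f i = of_typ i (bfs_trees f).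
Proof.
rewrite /sub_vertices sub_roots_of_typ; elim: (of_typ i _) (of_typ_no_same_typ_child i) => //=.
move=> t s IH /andP[/andP[/eqP ti nst] /IH ->].
rewrite bfs_levels tsizeE /= -ti; congr (_ :: _).
have /size0nil -> : size [seq c <- children t | typ c == typ t] = 0.
  by rewrite size_filter; apply/eqP; rewrite -no_same_typ_childE.
by rewrite levels_nil.
Qed.

Lemma Psi_of_typ i : Psi f i =
  mkseq (fun k => [ffun j => (\sum_(u <- take k (of_typ i (bfs_trees f)))
                               ((pch u j)%:Z - (i == j)%:Z))%R])
        (ntyp i (bfs_trees f)).+1.
Proof. by rewrite /Psi ffunE sub_vertices_of_typ size_of_typ. Qed.

Lemma xlen_Psi i : xlen (Psi f) i = ntyp i (bfs_trees f).
Proof. by rewrite /xlen Psi_of_typ size_mkseq. Qed.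

Lemma xval_Psi i j k : k <= ntyp i (bfs_trees f) ->
  xval (Psi f) i j k =
  ((ntyp j (next_gen (take k (of_typ i (bfs_trees f)))))%:Z - ((i == j) * k)%:Z)%R.
Proof.
move=> kV; rewrite /xval Psi_of_typ nth_mkseq // ffunE sumrB ntyp_next_gen.
rewrite -!(big_morph Posz PoszD (erefl _)) big_const_seq count_predT iter_addn_0.
by rewrite size_takel ?size_of_typ // mulnC.
Qed.

Lemma xval_Psi_diag i k : k <= ntyp i (bfs_trees f) -> xval (Psi f) i i k = (- k%:Z)%R.
Proof.
move=> kV; rewrite xval_Psi // eqxx mul1n ntyp_next_gen_typ_eq0 ?sub0r //.
have := of_typ_no_same_typ_child i.
by rewrite -{1}(cat_take_drop k (of_typ _ _)) all_cat => /andP[].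
Qed.

Lemma sum_xval_Psi (s : 'I_d -> nat) j : (forall i, s i <= ntyp i (bfs_trees f)) ->
  (\sum_(i < d) xval (Psi f) i j (s i))%R =
  ((\sum_(i < d) ntyp j (next_gen (take (s i) (of_typ i (bfs_trees f)))))%:Z - (s j)%:Z)%R.
Proof.
move=> sV; under eq_bigr => i _ do rewrite xval_Psi //.
by rewrite sumrB -!(big_morph Posz PoszD (erefl _)) sum_eqn_mul.
Qed.

Lemma Psi_in_Sd : in_Sd (Psi f).
Proof.
split=> [i|i j|i j k ij|i k]; rewrite ?xlen_Psi.
- by rewrite /Psi ffunE size_mkseq.
- by rewrite xval_Psi // take0 muln0 subr0.
- move=> ki; rewrite !xval_Psi // ?(ltnW ki) // (negbTE ij) !mul0n !subr0 lez_nat.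
  exact: ntyp_next_gen_take_mono.
- by move=> ki; rewrite !xval_Psi_diag // ?(ltnW ki) //; lia.
Qed.

Lemma Psi_smallest_solution (r : 'I_d -> nat) : (forall j, r j = ntyp j f) ->
  is_smallest_solution r (Psi f) (xlen (Psi f)).
Proof.
move=> rf; split.
  split=> // j; under eq_bigr => i _ do rewrite xlen_Psi.
  rewrite sum_xval_Psi //; under eq_bigr => i _ do rewrite -(size_of_typ i) take_size.
  by rewrite -ntyp_next_gen_of_typ rf (bfs_trees_balance j f); lia.
move=> s [sx ssol] i; rewrite xlen_Psi; apply: ntyp_bfs_trees_le => {}i.
have := ssol i; rewrite sum_xval_Psi => [|k]; last by rewrite -xlen_Psi.
by rewrite rf; lia.
Qed.

End NoSameTypChild.

(** * Decoding *)

Definition typ_le : rel 'I_d := fun a b => (a <= b)%N.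

(* nchild x i j k is the number of type-j children of the k-th type-i vertex
   encoded by the increments of x, and decode_children x i k their sorted types. *)
Definition nchild (x : Sdata d) i j k : nat :=
  absz (xval x i j k.+1 - xval x i j k + (i == j)%:Z)%R.

Definition decode_children (x : Sdata d) i k : seq 'I_d :=
  if k < xlen x i then sort typ_le (flatten [seq nseq (nchild x i j k) j | j <- enum 'I_d])
  else [::].

Lemma count_decode_children x i k a :
  count_mem a (decode_children x i k) = if k < xlen x i then nchild x i a k else 0.
Proof.
rewrite /decode_children; case: ifP => // _; rewrite (permP (permEl (perm_sort _ _))).
rewrite count_flatten -map_comp sumnE big_map big_enum (bigD1 a) //= count_nseq /= eqxx mul1n.
by rewrite big1 ?addn0 // => j /negbTE ja; rewrite count_nseq /= ja.
Qed.

Lemma sorted_decode_children x i k : sorted typ_le (decode_children x i k).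
Proof.
by rewrite /decode_children; case: ifP => // _; apply: sort_sorted => a b; apply: leq_total.
Qed.

Lemma eq_sorted_typ_le (s1 s2 : seq 'I_d) : sorted typ_le s1 -> sorted typ_le s2 ->
  (forall a, count_mem a s1 = count_mem a s2) -> s1 = s2.
Proof.
move=> so1 so2 c12; apply: (sorted_eq _ _ so1 so2).
- by move=> b a c; apply: leq_trans.
- by move=> a b /anti_leq /val_inj.
by rewrite /perm_eq; apply/allP => a _; apply/eqP; apply: c12.
Qed.

Lemma ntyp_next_gen_take_nth j L k x0 : k < size L ->
  ntyp j (next_gen (take k.+1 L)) = ntyp j (next_gen (take k L)) + pch (nth x0 L k) j.
Proof. by move=> kL; rewrite (take_nth x0 kL) -cats1 next_gen_cat ntyp_cat /next_gen /= cats0. Qed.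

Section PsiChildren.

Variable f : mforest d.
Hypotheses (f_Fd : in_Fd f) (f_no_same : all no_same_typ_child (vertices f)).

Lemma nchild_Psi i j k x0 : k < ntyp i (bfs_trees f) ->
  nchild (Psi f) i j k = pch (nth x0 (of_typ i (bfs_trees f)) k) j.
Proof.
move=> kV; rewrite /nchild !xval_Psi // ?(ltnW kV) //.
by rewrite (ntyp_next_gen_take_nth _ x0) ?size_of_typ //; case: (i == j); lia.
Qed.

Lemma follows_decode_Psi : follows (decode_children (Psi f)) (fun _ => 0) (bfs_trees f).
Proof.
move=> i k kV; rewrite add0n; apply: eq_sorted_typ_le.
- rewrite sorted_map; move: f_Fd; rewrite /in_Fd vertices_bfs_trees.
  by move/(all_of_typ i)/(all_nthP (MNode i [::])); apply; rewrite size_of_typ.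
- exact: sorted_decode_children.
move=> a; rewrite count_decode_children xlen_Psi // kV.
by rewrite (nchild_Psi _ (MNode i [::])) // count_typ.
Qed.

End PsiChildren.

Lemma in_Cr_root_types (r : 'I_d -> nat) f : in_Cr r (root_types f) -> forall j, r j = ntyp j f.
Proof. by case=> _ rC j; rewrite -rC count_typ. Qed.

Lemma Psi_in_barSr (r : 'I_d -> nat) f : in_barFr r f -> in_barSr r (Psi f).
Proof.
move=> [[_ _ fhas fC] fns]; split; last by move=> i k; rewrite xlen_Psi //; apply: xval_Psi_diag.
split; first exact: Psi_in_Sd.
  by move=> i; rewrite xlen_Psi // -has_count -vertices_bfs_trees.
exact/Psi_smallest_solution/in_Cr_root_types.
Qed.

Lemma Psi_inj f g : in_Fd f -> in_Fd g ->
  all no_same_typ_child (vertices f) -> all no_same_typ_child (vertices g) ->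
  Psi f = Psi g -> root_types f = root_types g -> f = g.
Proof.
move=> fFd gFd fns gns ePsi eroots.
apply: (@follows_bfs_trees_inj (decode_children (Psi f)) (fun _ => 0)) => //.
  exact: follows_decode_Psi.
by rewrite ePsi; apply: follows_decode_Psi.
Qed.

Definition nchild_sum (x : Sdata d) k i p := \sum_(l < p) count_mem i (decode_children x k l).

Lemma nchild_sum_mono x k i p q : p <= q -> nchild_sum x k i p <= nchild_sum x k i q.
Proof.
move=> pq; rewrite /nchild_sum -!(big_mkord xpredT (fun l => count_mem i (decode_children x k l))).
by rewrite (big_cat_nat (leq0n p) pq) /= leq_addr.
Qed.

Lemma decode_children_oversize x i k : xlen x i <= k -> decode_children x i k = [::].
Proof. by rewrite /decode_children ltnNge => ->. Qed.

Lemma ntyp_next_gen_follows_decode x L k i p :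
  follows (decode_children x) (fun _ => 0) L -> p <= ntyp k L ->
  ntyp i (next_gen (take p (of_typ k L))) = nchild_sum x k i p.
Proof.
move=> fL; elim: p => [|p IH] pL; first by rewrite take0 /nchild_sum big_ord0.
rewrite (ntyp_next_gen_take_nth _ (MNode k [::])) ?size_of_typ // IH ?(ltnW pL) //.
by rewrite /nchild_sum big_ord_recr /= -(fL k p pL) count_map.
Qed.

Section Decoding.

Variables (r : 'I_d -> nat) (x : Sdata d).
Hypothesis x_barSr : in_barSr r x.

Let x_Sd : in_Sd x. Proof. by case: x_barSr => -[]. Qed.
Let x_diag i k : k <= xlen x i -> xval x i i k = (- k%:Z)%R.
Proof. by case: x_barSr => _; apply. Qed.

Lemma nchildE i j k : k < xlen x i ->
  ((nchild x i j k)%:Z = xval x i j k.+1 - xval x i j k + (i == j)%:Z)%R.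
Proof.
case: x_Sd => _ _ xmono _ ki; rewrite /nchild.
have [<-|ij] := eqVneq i j; first by rewrite !x_diag ?(ltnW ki) //=; lia.
by have := xmono i j k ij ki; rewrite /=; lia.
Qed.

Lemma nchild_sumE k i p : p <= xlen x k ->
  ((nchild_sum x k i p)%:Z = xval x k i p + ((k == i) * p)%:Z)%R.
Proof.
elim: p => [|p IH] pk; first by case: x_Sd => _ x0 _ _; rewrite /nchild_sum big_ord0 x0 muln0.
rewrite /nchild_sum big_ord_recr /= -/(nchild_sum x k i p) PoszD IH ?(ltnW pk) //.
by rewrite count_decode_children pk nchildE //; lia.
Qed.

Lemma sum_xval_nchild_sum (s : 'I_d -> nat) j : (forall i, s i <= xlen x i) ->
  (\sum_(i < d) xval x i j (s i))%R =
  ((\sum_(i < d) nchild_sum x i j (s i))%:Z - (s j)%:Z)%R.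
Proof.
move=> sx; under eq_bigr => i _ do
  rewrite -[xval _ _ _ _](addrK (Posz ((i == j) * s i))) -nchild_sumE //.
by rewrite sumrB -!(big_morph Posz PoszD (erefl _)) sum_eqn_mul.
Qed.

Variable f : mforest d.
Hypotheses (f_roots : in_Cr r (root_types f))
  (f_follows : follows (decode_children x) (fun _ => 0) (bfs_trees f)).

Lemma decoded_sorted_no_same :
  all (fun u => sorted typ_le (child_typs u) && no_same_typ_child u) (bfs_trees f).
Proof.
apply: (follows_all _ f_follows) => u k ck; rewrite ck sorted_decode_children /=.
rewrite no_same_typ_childE pchE ck count_decode_children.
case: ifP => // kx; rewrite -eqz_nat nchildE // eqxx !x_diag ?(ltnW kx) //.
by apply/eqP; lia.
Qed.

Let f_roots_ntyp : forall j, r j = ntyp j f := in_Cr_root_types f_roots.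

Lemma decoded_ntyp_le i : ntyp i (bfs_trees f) <= xlen x i.
Proof.
apply: ntyp_bfs_trees_le => {}i.
apply: (@leq_trans (ntyp i f + \sum_(k < d) nchild_sum x k i (xlen x k))).
  rewrite leq_add2l; apply: leq_sum => k _.
  have [kV|Vk] := leqP (xlen x k) (ntyp k (bfs_trees f)).
    by rewrite (ntyp_next_gen_follows_decode _ f_follows kV).
  rewrite take_oversize ?size_of_typ ?(ltnW Vk) // -[of_typ k _]take_size size_of_typ.
  by rewrite (ntyp_next_gen_follows_decode _ f_follows) // nchild_sum_mono // ltnW.
case: x_barSr => -[_ _ [[_ xsol] _]] _.
by have := xsol i; rewrite sum_xval_nchild_sum // f_roots_ntyp; lia.
Qed.

Lemma decoded_solution : is_solution r x (fun i => ntyp i (bfs_trees f)).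
Proof.
split=> [|j]; first exact: decoded_ntyp_le.
rewrite sum_xval_nchild_sum; last exact: decoded_ntyp_le.
under eq_bigr => i _ do
  rewrite -(ntyp_next_gen_follows_decode _ f_follows) // -[in take _ _]size_of_typ take_size.
by rewrite -ntyp_next_gen_of_typ f_roots_ntyp (bfs_trees_balance j f); lia.
Qed.

Lemma decoded_ntyp i : ntyp i (bfs_trees f) = xlen x i.
Proof.
case: x_barSr => -[_ _ [_ xmin]] _.
by apply/eqP; rewrite eqn_leq decoded_ntyp_le (xmin _ decoded_solution).
Qed.

Lemma decoded_in_barFr : in_barFr r f.
Proof.
have sns := decoded_sorted_no_same; rewrite -vertices_bfs_trees in sns.
split; last by apply: sub_all sns => u /andP[].
split=> [||i|//].
- by apply: sub_all sns => u /andP[]; rewrite sorted_map.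
- by case: f_roots; rewrite size_map.
- case: x_barSr => -[_ xpos _] _.
  by rewrite vertices_bfs_trees has_count -/(ntyp i _) decoded_ntyp.
Qed.

Lemma decoded_Psi : Psi f = x.
Proof.
have [_ fns] := decoded_in_barFr.
apply/ffunP => i; have sPsi : size (Psi f i) = (xlen x i).+1.
  by rewrite Psi_of_typ // size_mkseq decoded_ntyp.
apply: (@eq_from_nth _ [ffun=> 0%R]) => [|k]; first by rewrite sPsi /xlen prednK //; case: x_Sd.
rewrite sPsi ltnS => ki; apply/ffunP => j; change (xval (Psi f) i j k = xval x i j k).
rewrite xval_Psi ?decoded_ntyp // (ntyp_next_gen_follows_decode _ f_follows) ?decoded_ntyp //.
by rewrite nchild_sumE // addrK.
Qed.

End Decoding.

Lemma Phi_surj (r : 'I_d -> nat) x c : in_barSr r x -> in_Cr r c ->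
  exists f, in_barFr r f /\ Phi f = (x, c).
Proof.
move=> xS cC.
have [|f [fc ff]] :=
  @exists_follows_bfs_trees (decode_children x) (\sum_(i < d) xlen x i) _ c (fun _ => 0).
  move=> i k Nk; apply: decode_children_oversize; apply: leq_trans Nk.
  by rewrite (bigD1 i) //= leq_addr.
have fC : in_Cr r (root_types f) by rewrite /root_types fc.
exists f; rewrite /Phi (decoded_Psi xS fC ff) -fc.
by split=> //; apply: (decoded_in_barFr xS fC ff).
Qed.

End Forests.

Theorem lemma2p5 (d : nat) (r : 'I_d -> nat) :
  (2 <= d)%N -> (exists i, (0 < r i)%N) ->
  [/\ (forall f : mforest d, in_barFr r f ->
         in_barSr r (Phi f).1 /\ in_Cr r (Phi f).2),
      (forall f g : mforest d, in_barFr r f -> in_barFr r g -> Phi f = Phi g -> f = g)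
    & (forall (x : Sdata d) (c : seq 'I_d), in_barSr r x -> in_Cr r c ->
         exists f : mforest d, in_barFr r f /\ Phi f = (x, c))].
Proof.
move=> _ _; split.
- by move=> f fFr; split; [apply: Psi_in_barSr fFr | case: fFr => -[]].
- by move=> f g [[fFd _ _ _] fns] [[gFd _ _ _] gns] [ePsi eroots]; apply: Psi_inj.
- exact: Phi_surj.
Qed.
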